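(* If $X$ is a compact Alexandroff space, then the number of distinct basic sets in $X$ is at most $\min(X)$.
   Context: A topological space $X$ is an Alexandroff space if arbitrary intersections of open sets are open. In an Alexandroff space, $S(x)$ denotes the minimal open neighborhood of $x$, i.e. the intersection of all open sets containing $x$, which is open. $S(x)$ is called basic if for all $y,z\in X$: whenever $S(x)\subseteq S(y)$ and $S(z)\subseteq S(y)$ then $S(x)\subseteq S(z)$; and whenever $S(x)\not\subseteq S(y)$ then $S(x)\cap S(y)=\emptyset$. A basic set of $X$ is a set of the form $S(x)$ that is basic. For a compact Alexandroff space $X$, $\min(X)$ is the minimum cardinality $|V|$ over all finite covers $V$ of $X$ consisting of sets of the form $S(x)$, $x\in X$. *)

From mathcomp Require Import all_boot all_order.
From mathcomp Require Import finmap.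
From mathcomp Require Import all_classical topology.
Set Implicit Arguments. Unset Strict Implicit. Unset Printing Implicit Defensive.
Local Open Scope classical_set_scope.

Definition alexandroff (T : topologicalType) : Prop :=
  forall (F : set (set T)), (forall U, F U -> open U) -> open (\bigcap_(U in F) U).

Definition Smin (T : topologicalType) (x : T) : set T :=
  \bigcap_(U in [set U : set T | open U /\ U x]) U.

Definition is_basic (T : topologicalType) (x : T) : Prop :=
  forall y z : T,
    (Smin x `<=` Smin y -> Smin z `<=` Smin y -> Smin x `<=` Smin z) /\
    (~ (Smin x `<=` Smin y) -> Smin x `&` Smin y = set0).

Definition basic_sets (T : topologicalType) : set (set T) :=
  [set B | exists x : T, B = Smin x /\ is_basic x].

Definition S_cover (T : topologicalType) (V : {fset (set T)}) : Prop :=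
  (forall B, B \in V -> exists x : T, B = Smin x) /\
  (forall t : T, exists2 B, B \in V & B t).

From mathcomp Require Import all_boot all_order.
From mathcomp Require Import finmap.
From mathcomp Require Import all_classical topology.
Set Implicit Arguments. Unset Strict Implicit. Unset Printing Implicit Defensive.
Local Open Scope classical_set_scope.

(* Every basic set S(x) lies in a member S(v) of the cover (the one containing
   x, since S(v) is open and S(x) is minimal), and two basic sets inside the
   same S(v) coincide by the first clause of basicness.  So "the cover member
   containing it" is an injective choice from basic sets to V. *)

Lemma card_le_fset_of_rel (X : pointedType) (Y : choiceType) (A : set X)
    (V : {fset Y}) (R : X -> Y -> Prop) :
  (forall a, A a -> exists2 v, v \in V & R a v) ->
  (forall v a a', v \in V -> A a -> A a' -> R a v -> R a' v -> a = a') ->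
  (A #<= [set` V])%card.
Proof.
move=> AV Runiq.
pose V' := [set v | v \in V /\ exists2 a, A a & R a v].
pose related_to v := [set a | A a /\ R a v].
pose h v := get (related_to v).
have hP v : V' v -> related_to v (h v).
  by move=> [_ [a Aa Rav]]; apply: xgetPex; exists a.
have -> : A = h @` V'.
  apply/seteqP; split=> [a Aa | _ [v V'v <-]]; last exact: (hP v V'v).1.
  have [v vV Rav] := AV a Aa.
  have V'v : V' v by split=> //; exists a.
  exists v => //; have [Ahv Rhv] := hP v V'v.
  exact: Runiq vV Ahv Aa Rhv Rav.
apply: card_le_trans (card_image_le _ _) _.
by apply: subset_card_le => v [].
Qed.

Lemma finite_card_le_fset (X Y : choiceType) (A : set X) (V : {fset Y}) :
  (A #<= [set` V])%card -> finite_set A /\ (#|` fset_set A| <= #|` V|)%N.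
Proof.
move=> AV; have /card_eq_fsetP VI : #|` V| = #|` V| by [].
have AI : (A #<= `I_#|` V|)%card by rewrite -(card_le_eqr VI).
by split; [apply/finite_set_leP; exists #|` V| | exact: geq_card_fset_set].
Qed.

Lemma Smin_open (T : topologicalType) (x : T) : alexandroff T -> open (Smin x).
Proof. by move=> hA; apply: hA => U []. Qed.

Lemma Smin_subset (T : topologicalType) (x v : T) : alexandroff T ->
  Smin v x -> Smin x `<=` Smin v.
Proof. by move=> hA vx t xt; apply: xt; split => //; exact: Smin_open. Qed.

Lemma basic_Smin_eq (T : topologicalType) (x x' v : T) :
  is_basic x -> is_basic x' ->
  Smin x `<=` Smin v -> Smin x' `<=` Smin v -> Smin x = Smin x'.
Proof.
move=> bx bx' xv x'v; apply/seteqP; split.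
- exact: (bx v x').1.
- exact: (bx' v x).1.
Qed.

Theorem theorem17 (T : topologicalType) :
  alexandroff T -> compact [set: T] ->
  forall V : {fset (set T)}, S_cover V ->
    finite_set (@basic_sets T) /\ (#|` fset_set (@basic_sets T)| <= #|` V|)%N.
Proof.
move=> hA _ V [VS Vcov]; apply: finite_card_le_fset.
apply: (@card_le_fset_of_rel _ _ _ _ (fun B C => B `<=` C)).
- move=> _ [x [-> _]]; have [C CV Cx] := Vcov x.
  exists C => //; have [v Cv] := VS C CV; subst C.
  exact: Smin_subset.
- move=> C _ _ /VS [v ->] [x [-> bx]] [x' [-> bx']].
  exact: basic_Smin_eq.
Qed.
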